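(* Let $\alpha,\beta,\gamma,\delta\in\mathbb{R}$ with $\alpha+\delta\neq 0$ and $\alpha\gamma+\beta\delta=0$, and let $G_5$ be the connected, simply connected Lie group whose Lie algebra $\mathfrak{g}_5$ has a basis $\{e_1,e_2,e_3\}$ with $[e_1,e_2]=0$, $[e_1,e_3]=\alpha e_1+\beta e_2$, $[e_2,e_3]=\gamma e_1+\delta e_2$, equipped with the left-invariant Lorentzian metric $g$ for which $\{e_1,e_2,e_3\}$ is pseudo-orthonormal with $e_3$ timelike, and with the product structure $J$. Let $\lambda_0,c\in\mathbb{R}$. Then there exists a derivation $D$ of $\mathfrak{g}_5$ with $\widetilde{\mathrm{Ric}}^0=(s^0\lambda_0+c)\mathrm{Id}+D$ (i.e. $(G_5,g,J)$ is an algebraic Schouten soliton associated to the canonical connection $\nabla^0$) if and only if $c=0$.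
   Context: Pseudo-orthonormal means $g(e_1,e_1)=g(e_2,e_2)=1$, $g(e_3,e_3)=-1$, $g(e_i,e_j)=0$ for $i\neq j$; left-invariant tensors are identified with their values on $\mathfrak{g}$. $\nabla$ is the Levi-Civita connection of $g$. The product structure $J$ is the left-invariant endomorphism with $Je_1=e_1$, $Je_2=e_2$, $Je_3=-e_3$. The canonical connection is $\nabla^0_XY=\nabla_XY-\frac12(\nabla_XJ)JY$, and the Kobayashi–Nomizu connection is $\nabla^1_XY=\nabla^0_XY-\frac14[(\nabla_YJ)JX-(\nabla_{JY}J)X]$. For $k=0,1$: $R^k(X,Y)Z=\nabla^k_X\nabla^k_YZ-\nabla^k_Y\nabla^k_XZ-\nabla^k_{[X,Y]}Z$; $\rho^k(X,Y)=-g(R^k(X,e_1)Y,e_1)-g(R^k(X,e_2)Y,e_2)+g(R^k(X,e_3)Y,e_3)$; $\widetilde\rho^k(X,Y)=\frac12(\rho^k(X,Y)+\rho^k(Y,X))$; $\widetilde{\mathrm{Ric}}^k$ is defined by $\widetilde\rho^k(X,Y)=g(\widetilde{\mathrm{Ric}}^k(X),Y)$; and $s^k=\widetilde\rho^k(e_1,e_1)+\widetilde\rho^k(e_2,e_2)-\widetilde\rho^k(e_3,e_3)$. A derivation of $\mathfrak{g}$ is a linear map $D$ with $D[X,Y]=[DX,Y]+[X,DY]$. $(G,g,J)$ is an algebraic Schouten soliton associated to $\nabla^k$ (with real constants $\lambda_0,c$) if $\widetilde{\mathrm{Ric}}^k=(s^k\lambda_0+c)\mathrm{Id}+D$ for some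 derivation $D$. *)

(* Everything is left-invariant, hence identified with its
   value on the Lie algebra g5 = R^3 (row vectors 'rV[R]_3, basis e_1,e_2,e_3
   = delta_mx 0 i). Structure constants alpha beta gamma delta are passed
   explicitly as (a b g d). *)
From HB Require Import structures.
From mathcomp Require Import all_boot all_order all_algebra.
Set Implicit Arguments. Unset Strict Implicit. Unset Printing Implicit Defensive.
Import Order.TTheory GRing.Theory Num.Theory.
Local Open Scope ring_scope.

Definition i1 : 'I_3 := @Ordinal 3 0 isT.
Definition i2 : 'I_3 := @Ordinal 3 1 isT.
Definition i3 : 'I_3 := @Ordinal 3 2 isT.

Definition ev (R : realFieldType) (i : 'I_3) : 'rV[R]_3 := delta_mx 0 i.

Definition eps (R : realFieldType) (i : 'I_3) : R := if val i == 2%N then -1 else 1.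

Definition brE (R : realFieldType) (a b g d : R) (i j : 'I_3) : 'rV[R]_3 :=
  match val i, val j with
  | 0%N, 2%N => a *: ev R i1 + b *: ev R i2
  | 2%N, 0%N => - (a *: ev R i1 + b *: ev R i2)
  | 1%N, 2%N => g *: ev R i1 + d *: ev R i2
  | 2%N, 1%N => - (g *: ev R i1 + d *: ev R i2)
  | _, _ => 0
  end.

Definition br (R : realFieldType) (a b g d : R) (X Y : 'rV[R]_3) : 'rV[R]_3 :=
  \sum_(i < 3) \sum_(j < 3) (X 0 i * Y 0 j) *: brE a b g d i j.

Definition gm (R : realFieldType) (X Y : 'rV[R]_3) : R :=
  \sum_(i < 3) eps R i * X 0 i * Y 0 i.

Definition Jop (R : realFieldType) (X : 'rV[R]_3) : 'rV[R]_3 :=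
  \row_(i < 3) (eps R i * X 0 i).

(* Levi-Civita connection on left-invariant fields (Koszul formula):
   2 g(nabla_X Y, Z) = g([X,Y],Z) - g([Y,Z],X) + g([Z,X],Y),
   expanded in the pseudo-orthonormal basis. *)
Definition nabla (R : realFieldType) (a b g d : R) (X Y : 'rV[R]_3) : 'rV[R]_3 :=
  \sum_(k < 3) (eps R k / 2 *
     (gm (br a b g d X Y) (ev R k) - gm (br a b g d Y (ev R k)) X
      + gm (br a b g d (ev R k) X) Y)) *: ev R k.

Definition nablaJ (R : realFieldType) (a b g d : R) (X Y : 'rV[R]_3) : 'rV[R]_3 :=
  nabla a b g d X (Jop Y) - Jop (nabla a b g d X Y).

Definition nabla0 (R : realFieldType) (a b g d : R) (X Y : 'rV[R]_3) : 'rV[R]_3 :=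
  nabla a b g d X Y - (1/2) *: nablaJ a b g d X (Jop Y).

Definition curv0 (R : realFieldType) (a b g d : R) (X Y Z : 'rV[R]_3) : 'rV[R]_3 :=
  nabla0 a b g d X (nabla0 a b g d Y Z) - nabla0 a b g d Y (nabla0 a b g d X Z)
  - nabla0 a b g d (br a b g d X Y) Z.

Definition rho0 (R : realFieldType) (a b g d : R) (X Y : 'rV[R]_3) : R :=
  - gm (curv0 a b g d X (ev R i1) Y) (ev R i1)
  - gm (curv0 a b g d X (ev R i2) Y) (ev R i2)
  + gm (curv0 a b g d X (ev R i3) Y) (ev R i3).

Definition rhot0 (R : realFieldType) (a b g d : R) (X Y : 'rV[R]_3) : R :=
  (rho0 a b g d X Y + rho0 a b g d Y X) / 2.

(* Ricci operator: the unique endomorphism with g(Ric X, Y) = rhot(X,Y)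
   (written out in the pseudo-orthonormal basis) *)
Definition Ric0 (R : realFieldType) (a b g d : R) (X : 'rV[R]_3) : 'rV[R]_3 :=
  \sum_(k < 3) (eps R k * rhot0 a b g d X (ev R k)) *: ev R k.

Definition s0 (R : realFieldType) (a b g d : R) : R :=
  rhot0 a b g d (ev R i1) (ev R i1) + rhot0 a b g d (ev R i2) (ev R i2)
  - rhot0 a b g d (ev R i3) (ev R i3).

(* D (a linear map, given by its matrix acting on row vectors) is a derivation *)
Definition is_derivation (R : realFieldType) (a b g d : R) (D : 'M[R]_3) : Prop :=
  forall X Y : 'rV[R]_3,
    br a b g d X Y *m D = br a b g d (X *m D) Y + br a b g d X (Y *m D).

Definition schouten_soliton0 (R : realFieldType) (a b g d l0 c : R) : Prop :=
  exists D : 'M[R]_3, is_derivation a b g d D /\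
    forall X : 'rV[R]_3, Ric0 a b g d X = (s0 a b g d * l0 + c) *: X + X *m D.

(* The canonical connection of g5 only rotates the plane span(e1, e2), at a
   rate proportional to the e3-component of the direction:
   nabla^0_X = x3 (gamma - beta)/2 * rot, where rot e1 = e2 and rot e2 = -e1.
   All these operators commute and the brackets have no e3-component, so
   nabla^0 is flat and Ric^0 = 0, s^0 = 0. The soliton equation then forces
   D = -c Id, and a nonzero multiple of the identity is a derivation only of
   an abelian algebra, whereas alpha + delta != 0 makes g5 non-abelian. *)
From HB Require Import structures.
From mathcomp Require Import all_boot all_order all_algebra.
From mathcomp Require Import ring.
Import Order.TTheory GRing.Theory Num.Theory.
Local Open Scope ring_scope.

Section G5.

Context {R : realFieldType}.
Implicit Types (k : R) (X Y Z : 'rV[R]_3).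

Lemma row3_ext X Y :
  X 0 i1 = Y 0 i1 -> X 0 i2 = Y 0 i2 -> X 0 i3 = Y 0 i3 -> X = Y.
Proof.
move=> h1 h2 h3; apply/rowP => -[[|[|[|//]]] lt_k3].
- by rewrite (_ : Ordinal lt_k3 = i1) //; apply/val_inj.
- by rewrite (_ : Ordinal lt_k3 = i2) //; apply/val_inj.
- by rewrite (_ : Ordinal lt_k3 = i3) //; apply/val_inj.
Qed.

Lemma sum_ord3 (f : 'I_3 -> R) : \sum_(i < 3) f i = f i1 + f i2 + f i3.
Proof.
rewrite !big_ord_recr big_ord0 /= add0r.
by congr (f _ + f _ + f _); apply/val_inj.
Qed.

Definition rot12 Y : 'rV[R]_3 := Y 0 i1 *: ev R i2 - Y 0 i2 *: ev R i1.

Lemma rot12Z k Y : rot12 (k *: Y) = k *: rot12 Y.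
Proof. by rewrite /rot12 !mxE scalerBr !scalerA. Qed.

Lemma gmE X Y : gm X Y = X 0 i1 * Y 0 i1 + X 0 i2 * Y 0 i2 - X 0 i3 * Y 0 i3.
Proof. by rewrite /gm sum_ord3 /eps /=; ring. Qed.

Context {a b g d : R}.

Lemma br_coord1 X Y :
  br a b g d X Y 0 i1 = (X 0 i1 * Y 0 i3 - X 0 i3 * Y 0 i1) * a
                        + (X 0 i2 * Y 0 i3 - X 0 i3 * Y 0 i2) * g.
Proof. by rewrite /br summxE sum_ord3 !summxE !sum_ord3 /brE /= !mxE /=; ring. Qed.

Lemma br_coord2 X Y :
  br a b g d X Y 0 i2 = (X 0 i1 * Y 0 i3 - X 0 i3 * Y 0 i1) * b
                        + (X 0 i2 * Y 0 i3 - X 0 i3 * Y 0 i2) * d.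
Proof. by rewrite /br summxE sum_ord3 !summxE !sum_ord3 /brE /= !mxE /=; ring. Qed.

Lemma br_coord3 X Y : br a b g d X Y 0 i3 = 0.
Proof. by rewrite /br summxE sum_ord3 !summxE !sum_ord3 /brE /= !mxE /=; ring. Qed.

Lemma br_scalel k X Y : br a b g d (k *: X) Y = k *: br a b g d X Y.
Proof. by apply: row3_ext; rewrite [RHS]mxE ?br_coord1 ?br_coord2 ?br_coord3 ?mxE; ring. Qed.

Lemma br_scaler k X Y : br a b g d X (k *: Y) = k *: br a b g d X Y.
Proof. by apply: row3_ext; rewrite [RHS]mxE ?br_coord1 ?br_coord2 ?br_coord3 ?mxE; ring. Qed.

Lemma nabla0E X Y :
  nabla0 a b g d X Y = (X 0 i3 * (g - b) / 2) *: rot12 Y.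
Proof.
apply: row3_ext;
  rewrite /nabla0 /nablaJ /nabla /rot12 !mxE !summxE !sum_ord3 !mxE !gmE
          !br_coord1 !br_coord2 !br_coord3 /Jop /eps !mxE /=;
  by field; rewrite ?pnatr_eq0.
Qed.

Lemma curv0_eq0 X Y Z : curv0 a b g d X Y Z = 0.
Proof.
rewrite /curv0 !nabla0E br_coord3 !mul0r scale0r subr0 !rot12Z !scalerA.
by rewrite mulrC subrr.
Qed.

Lemma rhot0_eq0 X Y : rhot0 a b g d X Y = 0.
Proof. by rewrite /rhot0 /rho0 !curv0_eq0 !gmE !mxE; field. Qed.

Lemma Ric0_eq0 X : Ric0 a b g d X = 0.
Proof. by rewrite /Ric0 big1 // => k _; rewrite rhot0_eq0 mulr0 scale0r. Qed.

Lemma s0_eq0 : s0 a b g d = 0.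
Proof. by rewrite /s0 !rhot0_eq0 addr0 subr0. Qed.

Lemma scalar_is_derivation k (D : 'M[R]_3) :
  (forall X, X *m D = k *: X) ->
  is_derivation a b g d D <-> forall X Y, k *: br a b g d X Y = 0.
Proof.
move=> DE; split=> [derD X Y | kbr0 X Y].
- have := derD X Y; rewrite !DE br_scalel br_scaler => kbr2.
  by apply: (addrI (k *: br a b g d X Y)); rewrite addr0 -kbr2.
- by rewrite !DE br_scalel br_scaler kbr0 addr0.
Qed.

Lemma scale_br_eq0 k :
  a + d != 0 -> (forall X Y, k *: br a b g d X Y = 0) -> k = 0.
Proof.
move=> nz_ad kbr0.
have /(congr1 (fun V : 'rV_3 => V 0 i1)) := kbr0 (ev R i1) (ev R i3).
rewrite !mxE br_coord1 !mxE /= !(mul0r, mul1r, subr0, oppr0, add0r, addr0) => ka0.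
have /(congr1 (fun V : 'rV_3 => V 0 i2)) := kbr0 (ev R i2) (ev R i3).
rewrite !mxE br_coord2 !mxE /= !(mul0r, mul1r, subr0, oppr0, add0r, addr0) => kd0.
have /eqP : k * (a + d) = 0 by rewrite mulrDr ka0 kd0 addr0.
by rewrite mulf_eq0 (negbTE nz_ad) orbF => /eqP.
Qed.

End G5.

Theorem theorem4p10 (R : realFieldType) (a b g d l0 c : R) :
  a + d != 0 -> a * g + b * d = 0 ->
  (schouten_soliton0 a b g d l0 c <-> c = 0).
Proof.
move=> nz_ad _; split=> [[D [derD solD]] | ->].
- have DE (X : 'rV[R]_3) : X *m D = - c *: X.
    by move/eqP: (solD X); rewrite Ric0_eq0 s0_eq0 mul0r add0r eq_sym addrC
      addr_eq0 scaleNr => /eqP.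
  apply/eqP; rewrite -oppr_eq0; apply/eqP.
  exact: scale_br_eq0 nz_ad ((scalar_is_derivation _ _ DE).1 derD).
- exists 0; split=> [|X]; last first.
    by rewrite Ric0_eq0 s0_eq0 mul0r addr0 scale0r mulmx0 addr0.
  have DE (X : 'rV[R]_3) : X *m 0 = 0 *: X by rewrite mulmx0 scale0r.
  by apply/(scalar_is_derivation _ _ DE).2 => X Y; rewrite scale0r.
Qed.
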